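(* Let $\Gamma=F_r$ ($r\ge2$) be free on $\{a,b,a_3,\dots,a_r\}$, and for $n\ge2$ let $u_n=a^nba^{-n}b^{-1}$ and $D_n=V_{u_n}\subseteq Y$. Let $n_1,n_2\ge2$ and let $t\in\Gamma$ be nontrivial with $tD_{n_2}\cap D_{n_1}\ne\emptyset$. Then one of the following holds: (1) $t$ ends with $u_{n_2}^{-1}=ba^{n_2}b^{-1}a^{-n_2}$; (2) $t$ starts with $u_{n_1}=a^{n_1}ba^{-n_1}b^{-1}$; (3) $n_2\ne n_1$ and $t=u_{n_1}u_{n_2}^{-1}=a^{n_1}ba^{n_2-n_1}b^{-1}a^{-n_2}$.
   Context: $Y$ is the Gromov boundary of $\Gamma$: infinite reduced words in the generators and their inverses, with $\Gamma$ acting by concatenation and cancellation. For nontrivial $s\in\Gamma$: $y\in Y$ starts with $s$ if $y=sy'$ with $y'\in Y$ and the last letter of the reduced word of $s$ is not the inverse of the first letter of $y'$; $V_s$ is the set of $y\in Y$ starting with $s$; $t\in\Gamma$ starts (resp. ends) with $s$ if the reduced word of $t$ begins (resp. ends) with the reduced word of $s$. *)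

(* Free group F_r on generators indexed by nat k < r
   (a = generator 0, b = generator 1, a_3..a_r = generators 2..r-1). *)
From mathcomp Require Import all_boot.
Set Implicit Arguments. Unset Strict Implicit. Unset Printing Implicit Defensive.

(* A letter (k, false) is the generator a_k, (k, true) its inverse. *)
Definition letter := (nat * bool)%type.
Definition linv (x : letter) : letter := (x.1, ~~ x.2).

Definition reduced (w : seq letter) : bool := sorted (fun x y => y != linv x) w.
Definition word_on (r : nat) (w : seq letter) : bool := all (fun x => x.1 < r) w.
(* elements of Gamma = F_r are the reduced words over the r generators *)
Definition is_elem (r : nat) (t : seq letter) : bool := reduced t && word_on r t.

(* free reduction of a word; group product is reduce (s ++ t) *)
Definition reduce (w : seq letter) : seq letter :=
  foldr (fun x acc => if acc is y :: acc' then (if y == linv x then acc' else x :: acc)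
                      else [:: x]) [::] w.
Definition winv (w : seq letter) : seq letter := rev (map linv w).

(* Gromov boundary Y: infinite reduced words y : nat -> letter *)
Definition in_Y (r : nat) (y : nat -> letter) : Prop :=
  forall k, (y k).1 < r /\ y k.+1 != linv (y k).

Definition act1 (x : letter) (y : nat -> letter) : nat -> letter :=
  if y 0 == linv x then (fun k => y k.+1)
  else (fun k => if k is k'.+1 then y k' else x).
Definition act (w : seq letter) (y : nat -> letter) : nat -> letter := foldr act1 y w.

(* y starts with s: y = s y' with y' in Y and no cancellation between s and y' *)
Definition starts_with (r : nat) (s : seq letter) (y : nat -> letter) : Prop :=
  exists y', in_Y r y' /\ y =1 act s y' /\
    (if s is _ :: _ then y' 0 != linv (last (y' 0) s) else True).

Definition V (r : nat) (s : seq letter) (y : nat -> letter) : Prop :=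
  in_Y r y /\ starts_with r s y.

Definition ga : letter := (0, false).
Definition gb : letter := (1, false).

Definition u (n : nat) : seq letter :=
  reduce (nseq n ga ++ [:: gb] ++ nseq n (linv ga) ++ [:: linv gb]).

Definition D (r n : nat) (y : nat -> letter) : Prop := V r (u n) y.

(* Let y = u_{n2} y2 with t y = u_{n1} y1, and write t = t' c^-1, where c is the
   prefix of y cancelled by t, so that t y = t' (c^-1 y).  Unless c contains all
   of u_{n2} (then t ends with u_{n2}^-1) or t' contains all of u_{n1} (then t
   starts with u_{n1}), t' and c are proper prefixes of u_{n1} and u_{n2}, and the
   complementary suffixes, followed by y1 and y2 respectively, give the same
   infinite word.  Both suffixes end with b^-1, which occurs in u_n only as the
   last letter, so they are equal; hence t is the free reduction of
   u_{n1} u_{n2}^-1.  If n1 = n2, then t' and c have the same length, so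
   t = t' t'^-1 is reduced only when empty. *)

From mathcomp Require Import all_boot zify.
Set Implicit Arguments. Unset Strict Implicit. Unset Printing Implicit Defensive.

Definition icat T (s : seq T) (f : nat -> T) : nat -> T :=
  fun i => if i < size s then nth (f 0) s i else f (i - size s).

Section InfiniteConcatenation.
Variable T : eqType.
Implicit Types (s : seq T) (f g : nat -> T).

Lemma icat_nth x0 s f i : i < size s -> icat s f i = nth x0 s i.
Proof. by move=> lt_i_s; rewrite /icat lt_i_s; apply: set_nth_default. Qed.

Lemma icat_shift s f i : icat s f (size s + i) = f i.
Proof. by rewrite /icat ltnNge leq_addr addKn. Qed.

Lemma icat0 s f : icat s f 0 = head (f 0) s.
Proof. by case: s. Qed.

Lemma icat_cat s1 s2 f : icat (s1 ++ s2) f =1 icat s1 (icat s2 f).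
Proof.
move=> i; rewrite /icat size_cat nth_cat.
case: (ltnP i (size s1)) => [lt_i_s1 | le_s1_i].
  by rewrite ltn_addr // (set_nth_default (f 0)).
by rewrite -ltn_subLR // subnDA; case: ltnP.
Qed.

Lemma eq_icat s f g : f =1 g -> icat s f =1 icat s g.
Proof. by move=> fg i; rewrite /icat !fg. Qed.

Lemma icat_cancel s f g : icat s f =1 icat s g -> f =1 g.
Proof. by move=> e i; rewrite -(icat_shift s f) -(icat_shift s g). Qed.

Lemma icat_take_drop n s f : icat s f =1 icat (take n s) (icat (drop n s) f).
Proof. by move=> i; rewrite -icat_cat cat_take_drop. Qed.

Lemma icat_drop n s f i : n <= size s -> icat s f (n + i) = icat (drop n s) f i.
Proof.
move=> le_n_s; rewrite (icat_take_drop n).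
by rewrite -[n in n + i](size_takel le_n_s) icat_shift.
Qed.

Lemma icat_prefix s1 s2 f1 f2 :
  icat s1 f1 =1 icat s2 f2 -> size s1 <= size s2 -> prefix s1 s2.
Proof.
move=> e le_s12; rewrite prefixE; apply/eqP/(@eq_from_nth _ (f1 0)).
  by rewrite size_takel.
move=> i; rewrite size_takel // => lt_i_s1.
rewrite nth_take // -(icat_nth _ f2 (leq_trans lt_i_s1 le_s12)) -e.
exact: icat_nth.
Qed.

Lemma icat_rcons_inj x s1 s2 f1 f2 : x \notin s1 -> x \notin s2 ->
  icat (rcons s1 x) f1 =1 icat (rcons s2 x) f2 -> s1 = s2.
Proof.
move=> s1x s2x e.
have size_le s s' g g' : x \notin s -> icat (rcons s x) g =1 icat (rcons s' x) g' ->
    size s <= size s'.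
  move=> sx e'; rewrite leqNgt; apply: contra sx => lt_s'_s.
  have lt_s : size s' < size (rcons s x) by rewrite size_rcons ltnW.
  have lt_s' : size s' < size (rcons s' x) by rewrite size_rcons.
  have := e' (size s'); rewrite (icat_nth x g lt_s) (icat_nth x g' lt_s').
  by rewrite !nth_rcons ltnn eqxx lt_s'_s => <-; apply: mem_nth.
have eq_size : size s1 = size s2.
  by apply/eqP; rewrite eqn_leq (size_le _ _ f1 f2) ?(size_le _ _ f2 f1) // => i; rewrite e.
have : prefix (rcons s1 x) (rcons s2 x) by apply: icat_prefix e _; rewrite !size_rcons eq_size.
rewrite prefixE size_rcons eq_size -(size_rcons s2 x) take_size => /eqP e21.
exact/esym/(rcons_injl x e21).
Qed.

Lemma mkseq_icat s f n : mkseq (icat s f) n = take n s ++ mkseq f (n - size s).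
Proof.
elim: n => [|n IH]; first by rewrite take0.
rewrite mkseqS IH; case: (ltnP n (size s)) => [lt_n_s | le_s_n].
  have /eqP n_s0 : n - size s == 0 by rewrite subn_eq0 ltnW.
  have /eqP Sn_s0 : n.+1 - size s == 0 by rewrite subn_eq0.
  by rewrite n_s0 Sn_s0 !cats0 (take_nth (f 0)) // (icat_nth (f 0)).
rewrite !take_oversize ?(leq_trans le_s_n) // subSn // mkseqS -rcons_cat.
by rewrite /icat ltnNge le_s_n.
Qed.
End InfiniteConcatenation.

Arguments reduced : simpl never.

Lemma linvK : involutive linv.
Proof. by case=> k b; rewrite /linv negbK. Qed.

Lemma linv_neq x : x != linv x.
Proof. by case: x => k []; rewrite /linv /= xpair_eqE andbF. Qed.

Lemma reduced_cons x w : reduced (x :: w) = (head x w != linv x) && reduced w.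
Proof. by case: w => [|y w]; rewrite /= ?linv_neq. Qed.

Lemma reduced_rcons w x : reduced (rcons w x) = reduced w && (x != linv (last x w)).
Proof. by case: w => [|y w]; rewrite /reduced /= ?rcons_path ?linv_neq. Qed.

Lemma reduced_nseq_cat n x w :
  head x w != linv x -> reduced w -> reduced (nseq n x ++ w).
Proof.
move=> hw red_w; elim: n => //= n IH; rewrite reduced_cons IH andbT.
by case: n {IH} => [|n] //=; rewrite linv_neq.
Qed.

Lemma winv_rcons w x : winv (rcons w x) = linv x :: winv w.
Proof. by rewrite /winv map_rcons rev_rcons. Qed.

Lemma winv_cat w1 w2 : winv (w1 ++ w2) = winv w2 ++ winv w1.
Proof. by rewrite /winv map_cat rev_cat. Qed.

Lemma reduced_cat_winv w : reduced (w ++ winv w) -> w = [::].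
Proof.
case/lastP: w => // w x; rewrite winv_rcons cat_rcons.
by move/(suffix_sorted (suffix_suffix _ _)); rewrite -/(reduced _) reduced_cons eqxx.
Qed.

Definition reduce_step (x : letter) (acc : seq letter) : seq letter :=
  if acc is y :: acc' then (if y == linv x then acc' else x :: acc) else [:: x].

Lemma reduceE w : reduce w = foldr reduce_step [::] w.
Proof. by []. Qed.

Lemma reduced_step x acc : reduced acc -> reduced (reduce_step x acc).
Proof.
case: acc => [|y acc] //=; case: eqP => [_ | /eqP y_x red_acc].
  by rewrite reduced_cons => /andP[].
by rewrite reduced_cons y_x.
Qed.

Lemma reduced_reduce w : reduced (reduce w).
Proof. by elim: w => //= x w; apply: reduced_step. Qed.

Lemma reduce_step_cancel x acc :
  reduced acc -> reduce_step x (reduce_step (linv x) acc) = acc.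
Proof.
case: acc => [|y acc]; first by rewrite /= eqxx.
rewrite /= linvK; case: eqP => [-> | _]; last by rewrite /= eqxx.
by case: acc => [|z acc] //; rewrite reduced_cons => /andP[/negbTE /= ->].
Qed.

Lemma foldr_reduce_step_id w acc :
  reduced (w ++ acc) -> foldr reduce_step acc w = w ++ acc.
Proof.
elim: w => //= x w IH; rewrite reduced_cons => /andP[hd red_w]; rewrite IH //.
by case: (w ++ acc) hd => //= y l /negbTE ->.
Qed.

Lemma foldr_reduce_step_winv w acc :
  reduced acc -> foldr reduce_step (foldr reduce_step acc (winv w)) w = acc.
Proof.
elim: w acc => //= x w IH acc red_acc.
rewrite -cat1s winv_cat foldr_cat /= IH ?reduce_step_cancel //.
exact: reduced_step.
Qed.

Lemma reduce_id w : reduced w -> reduce w = w.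
Proof. by move=> red_w; rewrite reduceE foldr_reduce_step_id cats0. Qed.

Lemma reduce_cancel s1 w s2 :
  reduced (s1 ++ s2) -> reduce (s1 ++ w ++ winv w ++ s2) = s1 ++ s2.
Proof.
move=> red_s12; have red_s2 : reduced s2 := suffix_sorted (suffix_suffix _ _) red_s12.
rewrite reduceE (catA w) !foldr_cat -reduceE reduce_id //.
by rewrite foldr_reduce_step_winv // foldr_reduce_step_id.
Qed.

Lemma reduce_cat_winv s1 s2 p k : drop p s1 = drop k s2 ->
  reduced (take p s1 ++ winv (take k s2)) ->
  reduce (s1 ++ winv s2) = take p s1 ++ winv (take k s2).
Proof.
move=> drop_eq /(reduce_cancel (drop p s1)) <-; congr reduce.
by rewrite {2}drop_eq -winv_cat cat_take_drop catA cat_take_drop.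
Qed.

Lemma act1_ext x f g : f =1 g -> act1 x f =1 act1 x g.
Proof. by move=> fg [|i]; rewrite /act1 fg; case: ifP. Qed.

Lemma act_ext w f g : f =1 g -> act w f =1 act w g.
Proof. by elim: w => //= x w IH fg; apply/act1_ext/IH. Qed.

Lemma act_icat s f : reduced (rcons s (f 0)) -> act s f =1 icat s f.
Proof.
elim: s => [|x s IH] /=; first by move=> _ i; rewrite /icat subn0.
rewrite reduced_cons => /andP[hd red_s] i.
rewrite (act1_ext x (IH red_s)) /act1 icat0.
have -> : head (f 0) s = head x (rcons s (f 0)) by case: s {IH hd red_s}.
by rewrite (negbTE hd); case: i.
Qed.

Lemma starts_with_icat r s y :
  reduced s -> starts_with r s y -> exists y', y =1 icat s y'.
Proof.
move=> red_s [y' [_ [y_s s_y']]]; exists y' => i; rewrite y_s; apply: act_icat.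
by case: s {y_s} red_s s_y' => // x s red_s s_y'; rewrite reduced_rcons red_s.
Qed.

Lemma act_reduced_split t f : reduced t ->
  exists t' k, t = t' ++ winv (mkseq f k) /\ act t f =1 icat t' (fun i => f (k + i)).
Proof.
elim: t => [|x t IH]; first by exists [::], 0; split => // i; rewrite /icat subn0.
rewrite reduced_cons => /andP[hd /IH[t' [k [t_eq act_t]]]].
have act_xt : act (x :: t) f =1 act1 x (icat t' (fun i => f (k + i))).
  exact: act1_ext.
case: t' t_eq act_t act_xt => [|z t'] t_eq act_t act_xt; last first.
  exists [:: x, z & t'], k; split; first by rewrite t_eq.
  move=> i; rewrite act_xt /act1 icat0 /=.
  by move: hd; rewrite t_eq /= => /negbTE ->; case: i.
case: (eqVneq (f k) (linv x)) => [fk | fk].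
  exists [::], k.+1; split; first by rewrite mkseqS winv_rcons fk linvK t_eq.
  by move=> i; rewrite act_xt /act1 icat0 /= addn0 fk eqxx /icat /= !subn0 addnS.
exists [:: x], k; split; first by rewrite t_eq.
by move=> [|i]; rewrite act_xt /act1 icat0 /= addn0 (negbTE fk) /icat //= subSS !subn0.
Qed.

Lemma act_icat_cases t s1 s2 f1 f2 : reduced t ->
    act t (icat s2 f2) =1 icat s1 f1 ->
  [\/ suffix (winv s2) t, prefix s1 t |
       exists p k, [/\ p < size s1, k < size s2, t = take p s1 ++ winv (take k s2)
                     & icat (drop p s1) f1 =1 icat (drop k s2) f2]].
Proof.
move=> red_t act_t; have [t' [k [t_eq act_split]]] := act_reduced_split (icat s2 f2) red_t.
have E : icat t' (fun i => icat s2 f2 (k + i)) =1 icat s1 f1.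
  by move=> i; rewrite -act_split act_t.
rewrite mkseq_icat in t_eq.
have [le_s2_k | lt_k_s2] := leqP (size s2) k.
  apply: Or31; apply/suffixP; exists (t' ++ winv (mkseq f2 (k - size s2))).
  by rewrite t_eq take_oversize // winv_cat catA.
have [le_s1_t' | lt_t'_s1] := leqP (size s1) (size t').
  by apply: Or32; rewrite t_eq prefix_catl // (icat_prefix (fsym E)).
have t'_eq : t' = take (size t') s1.
  by apply/esym/eqP; rewrite -prefixE (icat_prefix E) // ltnW.
move: (size t') lt_t'_s1 t'_eq => p lt_p_s1 t'_eq; subst t'.
apply: Or33; exists p, k; split=> //.
  have /eqP k_s2 : k - size s2 == 0 by rewrite subn_eq0 ltnW.
  by rewrite t_eq k_s2 [mkseq _ 0]/= cats0.
apply: (@icat_cancel _ (take p s1)) => i; rewrite -icat_take_drop -E.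
by apply: eq_icat => j; apply: icat_drop (ltnW lt_k_s2).
Qed.

Lemma uE n : 0 < n -> u n = rcons (nseq n ga ++ gb :: nseq n (linv ga)) (linv gb).
Proof.
move=> n_gt0; rewrite /u reduce_id; first by rewrite -cats1 -catA.
apply: reduced_nseq_cat => //.
by rewrite reduced_cons reduced_nseq_cat // andbT; case: n n_gt0.
Qed.

Lemma drop_u_inj n1 n2 p k f1 f2 : 0 < n1 -> 0 < n2 ->
  p < size (u n1) -> k < size (u n2) ->
  icat (drop p (u n1)) f1 =1 icat (drop k (u n2)) f2 -> drop p (u n1) = drop k (u n2).
Proof.
have binv_notin n m : linv gb \notin drop m (nseq n ga ++ gb :: nseq n (linv ga)).
  by apply/negP => /mem_drop; rewrite mem_cat inE !mem_nseq !andbF.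
move=> n1_gt0 n2_gt0; rewrite !uE // !size_rcons !ltnS => le_p le_k.
by rewrite !drop_rcons // => /icat_rcons_inj->.
Qed.

Theorem lemma5p7 (r : nat) (hr : 2 <= r) (n1 n2 : nat) (h1 : 2 <= n1) (h2 : 2 <= n2)
  (t : seq letter) (ht : is_elem r t) (tnt : t != [::])
  (hint : exists y, D r n2 y /\ D r n1 (act t y)) :
  suffix (winv (u n2)) t \/ prefix (u n1) t \/
  (n2 != n1 /\ t = reduce (u n1 ++ winv (u n2))).
Proof.
have [n1_gt0 n2_gt0] : 0 < n1 /\ 0 < n2 by split; apply: ltnW.
have /andP[red_t _] := ht.
have red_u n : reduced (u n) := reduced_reduce _.
have [y [[_ /(starts_with_icat (red_u _))[y2 y_eq]]
         [_ /(starts_with_icat (red_u _))[y1 ty_eq]]]] := hint.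
have act_t : act t (icat (u n2) y2) =1 icat (u n1) y1.
  by move=> i; rewrite -ty_eq; apply: act_ext (fsym y_eq) i.
case: (act_icat_cases red_t act_t) => [||[p [k [lt_p lt_k t_eq drop_icat]]]];
  [by left | by right; left | right; right].
have drop_eq := drop_u_inj n1_gt0 n2_gt0 lt_p lt_k drop_icat.
split; last by rewrite (reduce_cat_winv drop_eq) -t_eq.
apply/eqP => n21; subst n2.
have p_k : p = k by move/(congr1 size): drop_eq; rewrite !size_drop; lia.
by move: red_t tnt; rewrite t_eq p_k => /reduced_cat_winv ->.
Qed.
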